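(* Let $n\ge 2$ and let $\Omega\subset\mathbb{R}^n$ be a smooth bounded strictly convex domain. Let $f,g$ be positive $C^2$ functions of one real variable with $G(s):=g(s)+2s\,g'(s)>0$ for $s>0$. Let $u$ be the solution of \[ \mathrm{div}\big(g(|\nabla u|^2)\nabla u\big)=f(u)\,G(|\nabla u|^2)\ \text{in }\Omega,\qquad u=0\ \text{on }\partial\Omega, \] let $F(y)=\int_y^0 f(s)\,ds$ for $y\le 0$, and $\Phi(\mathbf{x};\beta)=|\nabla u(\mathbf{x})|^2-\beta F(u(\mathbf{x}))$. If $\beta\in[1,2]$, then $\Phi(\cdot;\beta)$ is not identically constant on $\overline\Omega$. *)

From HB Require Import structures.
From mathcomp Require Import all_boot all_order all_algebra.
From mathcomp Require Import all_classical all_reals all_analysis.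
Set Implicit Arguments. Unset Strict Implicit. Unset Printing Implicit Defensive.
Import Order.TTheory GRing.Theory Num.Theory.
Import numFieldNormedType.Exports.
Local Open Scope classical_set_scope.
Local Open Scope ring_scope.

Section Defs.
Variables (R : realType) (n : nat).

Definition ebasis (i : 'I_n) : 'rV[R]_n := delta_mx 0 i.

Definition partial (h : 'rV[R]_n -> R) (i : 'I_n) (x : 'rV[R]_n) : R :=
  'D_(ebasis i) h x.

Definition grad (h : 'rV[R]_n -> R) (x : 'rV[R]_n) : 'rV[R]_n :=
  \row_i partial h i x.

Definition sqnorm (v : 'rV[R]_n) : R := \sum_i (v 0 i) ^+ 2.

Definition div (V : 'rV[R]_n -> 'rV[R]_n) (x : 'rV[R]_n) : R :=
  \sum_i partial (fun y => V y 0 i) i x.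

Fixpoint Ck (k : nat) (h : 'rV[R]_n -> R) : Prop :=
  match k with
  | 0 => continuous h
  | k.+1 => (forall x, differentiable h x) /\ forall i, Ck k (partial h i)
  end.

Definition smooth (h : 'rV[R]_n -> R) : Prop := forall k, Ck k h.

Definition C1_on (A : set 'rV[R]_n) (h : 'rV[R]_n -> R) : Prop :=
  forall x, A x -> differentiable h x /\ forall i, {for x, continuous (partial h i)}.

Definition C2_on (A : set 'rV[R]_n) (h : 'rV[R]_n -> R) : Prop :=
  C1_on A h /\ forall i, C1_on A (partial h i).

(* bounded smooth domain: open, connected, bounded, with a smooth global
   defining function rho (Omega = {rho < 0}, grad rho <> 0 on {rho = 0}) *)
Definition smooth_bounded_domain (Om : set 'rV[R]_n) : Prop :=
  [/\ open Om, connected Om, Om !=set0,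
      (exists M : R, forall x, Om x -> `|x| <= M) &
      exists rho : 'rV[R]_n -> R,
        [/\ smooth rho, Om = [set x | rho x < 0] &
            forall x, rho x = 0 -> grad rho x != 0]].

Definition strictly_convex (Om : set 'rV[R]_n) : Prop :=
  forall x y t, closure Om x -> closure Om y -> x != y -> 0 < t < 1 ->
    Om (t *: x + (1 - t) *: y).

End Defs.

Fixpoint Ck1 {R : realType} (k : nat) (h : R -> R) : Prop :=
  match k with
  | 0 => continuous h
  | k.+1 => (forall x, derivable h x 1) /\ Ck1 k (derive1 h)
  end.

Definition Fprim {R : realType} (f : R -> R) (y : R) : R :=
  Rintegral lebesgue_measure `[y, 0] f.

From HB Require Import structures.
From mathcomp Require Import all_boot all_order all_algebra.
From mathcomp Require Import all_classical all_reals all_analysis.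
Import Order.TTheory GRing.Theory Num.Theory.
Import numFieldNormedType.Exports.
Set Implicit Arguments.
Unset Strict Implicit.
Unset Printing Implicit Defensive.

Local Open Scope classical_set_scope.
Local Open Scope ring_scope.

(* If Phi = |grad u|^2 - beta F(u) were constant, its value at a boundary point
   (where u = 0) would be >= 0, while at an interior minimum with u < 0 it would
   be -beta F(u) < 0; hence u >= 0, F(u) = 0 and |grad u|^2 is constant.  At an
   interior extremum of u the gradient vanishes, so grad u = 0 throughout Omega;
   then the left-hand side of the equation vanishes while the right-hand side
   f(u) g(0) is positive. *)

Section RowVectorExtrema.
Variables (R : realType) (n : nat).
Implicit Types (A : set 'rV[R]_n) (h : 'rV[R]_n -> R) (x v : 'rV[R]_n).

Lemma bounded_closure_compact A M : (forall x, A x -> `|x| <= M) ->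
  compact (closure A).
Proof.
move=> AM; apply: bounded_closed_compact; last exact: closed_closure.
have r0 : 0 < `|M| + 1 by rewrite ltr_wpDl.
have Aball : A `<=` ball (0 : 'rV[R]_n) (`|M| + 1).
  move=> y Ay; rewrite -ball_normE /ball_ /= sub0r normrN.
  by rewrite (le_lt_trans (AM _ Ay)) // (le_lt_trans (ler_norm M)) ?ltrDl.
exists (`|M| + 1); split; first exact: num_real.
move=> r lt_r y /(closureS Aball) Ky.
have : closed_ball (0 : 'rV[R]_n) (`|M| + 1) y := Ky.
rewrite closed_ballE // /closed_ball_ /= sub0r normrN => /le_trans; apply.
exact: ltW.
Qed.

Lemma open_line_ball A x v : open A -> A x ->
  exists2 r : R, 0 < r & forall t : R, `|t| < r -> A (t *: v + x).
Proof.
move=> oA Ax; have /nbhs_ballP[e e0 eA] : nbhs x A by apply: oA.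
have v1 : 0 < `|v| + 1 by rewrite ltr_wpDl.
exists (e / (`|v| + 1)); first by rewrite divr_gt0.
move=> t; rewrite ltr_pdivlMr // => te; apply: eA.
rewrite -ball_normE /ball_ /= addrC opprD subrK normrN normrZ.
by apply: le_lt_trans te; rewrite ler_wpM2l // lerDl.
Qed.

Lemma exists_boundary_point A : (0 < n)%N -> open A -> A !=set0 ->
  compact (closure A) -> exists b, closure A b /\ ~ A b.
Proof.
move=> n0 oA [a Aa] cA; pose i := Ordinal n0.
have cK : {within closure A, continuous (fun x : 'rV[R]_n => x 0 i)}.
  by apply: continuous_subspaceT; exact: coord_continuous.
have [p /set_mem Kp pmax] := EVT_max_rV (ex_intro _ a (subset_closure Aa)) cA cK.
exists p; split => // Ap; have [r r0 hr] := open_line_ball (delta_mx 0 i) oA Ap.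
have Aq : A ((r / 2) *: delta_mx 0 i + p).
  by apply: hr; rewrite gtr0_norm ?divr_gt0 // ltr_pdivrMr // ltr_pMr // ltr1n.
have := pmax _ (mem_set (subset_closure Aq)).
by rewrite !mxE !eqxx mulr1 gerDr leNgt divr_gt0.
Qed.

Lemma line_quotientE h x v t :
  (fun s : R => s^-1 *: (((fun r : R => h (r *: v + x)) \o shift t) (s *: 1)
                         - h (t *: v + x)))
  = (fun s : R => s^-1 *: ((h \o shift (t *: v + x)) (s *: v) - h (t *: v + x))).
Proof.
apply/funext => s /=; congr (_ *: (h _ - _)).
by rewrite scalerDl addrA [s *: 1]mulr1.
Qed.

Lemma derivable_line h x v t :
  derivable (fun r : R => h (r *: v + x)) t 1 = derivable h (t *: v + x) v.
Proof. by rewrite /derivable line_quotientE. Qed.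

Lemma derive_line h x v t :
  'D_1 (fun r : R => h (r *: v + x)) t = 'D_v h (t *: v + x).
Proof. by rewrite /derive line_quotientE. Qed.

Definition extremum_on A h x :=
  (forall y, A y -> h x <= h y) \/ (forall y, A y -> h y <= h x).

Lemma derive_eq0_at_extremum A h x v : open A -> A x ->
  (forall y, A y -> derivable h y v) -> extremum_on A h x -> 'D_v h x = 0.
Proof.
move=> oA Ax dh ext; have [r r0 hr] := open_line_ball v oA Ax.
have rA t : t \in `]-r, r[ -> A (t *: v + x).
  by rewrite in_itv /= => /andP[? ?]; apply: hr; rewrite ltr_norml; apply/andP.
have dk t : t \in `]-r, r[ -> derivable (fun s : R => h (s *: v + x)) t 1.
  by move=> /rA; rewrite derivable_line; apply: dh.
have r0r : (0 : R) \in `]-r, r[ by rewrite in_itv /= oppr_lt0 r0.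
have le_r : -r <= r by rewrite ge0_cp // ltW.
suff D0 : is_derive (0 : R) (1 : R) (fun s : R => h (s *: v + x)) 0.
  by have := @derive_val _ _ _ _ _ _ _ D0; rewrite derive_line scale0r add0r.
case: ext => ext.
- by apply: derive1_at_min le_r dk r0r _ => t /rA At; rewrite scale0r add0r ext.
- by apply: derive1_at_max le_r dk r0r _ => t /rA At; rewrite scale0r add0r ext.
Qed.

Lemma grad_eq0_at_extremum A h x : open A -> A x ->
  (forall y, A y -> differentiable h y) -> extremum_on A h x -> grad h x = 0.
Proof.
move=> oA Ax dh ext; apply/rowP => i; rewrite !mxE.
by apply: derive_eq0_at_extremum oA Ax _ ext => y /dh /diff_derivable.
Qed.

Lemma interior_extremum A h a : A !=set0 -> compact (closure A) ->
  {within closure A, continuous h} -> (forall x, closure A x -> ~ A x -> h x = a) ->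
  exists2 p, A p & extremum_on A h p.
Proof.
move=> [z Az] cA ch hbd; have K0 : closure A !=set0 by exists z; apply: subset_closure.
have inK y : A y -> y \in closure A by move=> /subset_closure /mem_set.
have [x0 /set_mem Kx0 x0min] := EVT_min_rV K0 cA ch.
have [x1 /set_mem Kx1 x1max] := EVT_max_rV K0 cA ch.
have [Ax0|Nx0] := pselect (A x0); first by exists x0 => //; left => y /inK /x0min.
have [Ax1|Nx1] := pselect (A x1); first by exists x1 => //; right => y /inK /x1max.
exists z => //; left => y Ay; apply: le_trans (x1max _ (inK _ Az)) _.
by rewrite (hbd _ Kx1 Nx1) -(hbd _ Kx0 Nx0) x0min ?inK.
Qed.

Lemma div_eq0_near (V : 'rV[R]_n -> 'rV[R]_n) x :
  (\forall y \near x, V y = 0) -> div V x = 0.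
Proof.
move=> V0; rewrite /div big1 // => i _.
rewrite /partial (@near_eq_derive _ _ _ _ (cst 0)) ?derive_cst //.
by apply: filterS V0 => y ->; rewrite mxE.
Qed.

End RowVectorExtrema.

Lemma sqnorm_ge0 (R : realType) n (v : 'rV[R]_n) : 0 <= sqnorm v.
Proof. by apply: sumr_ge0 => i _; exact: sqr_ge0. Qed.

Lemma sqnorm0 (R : realType) n : sqnorm (0 : 'rV[R]_n) = 0.
Proof. by rewrite /sqnorm big1 // => i _; rewrite mxE expr0n. Qed.

Lemma sqnorm_eq0 (R : realType) n (v : 'rV[R]_n) : (sqnorm v == 0) = (v == 0).
Proof.
apply/idP/eqP => [|->]; last by rewrite sqnorm0.
rewrite psumr_eq0 => [/allP v0|i _]; last exact: sqr_ge0.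
apply/rowP => j; rewrite mxE; apply/eqP; rewrite -sqrf_eq0.
by apply: v0; rewrite mem_index_enum.
Qed.

Lemma Rintegral_itv_gt0 (R : realType) (f : R -> R) a b : a < b ->
  {within `[a, b], continuous f} -> {in `[a, b], forall x, 0 < f x} ->
  0 < \int[lebesgue_measure]_(x in `[a, b]) f x.
Proof.
move=> ab cf fpos; have [c cab cmin] := EVT_min (ltW ab) cf.
have integrable_cc (h : R -> R) : {within `[a, b], continuous h} ->
    lebesgue_measure.-integrable `[a, b] (EFin \o h).
  by move=> ch; apply: continuous_compact_integrable => //; exact: segment_compact.
apply: (@lt_le_trans _ _ (\int[lebesgue_measure]_(x in `[a, b]) f c)).
  rewrite Rintegral_cst //.
  have -> : fine (lebesgue_measure (`[a, b]%classic : set R)) = b - a.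
    by rewrite lebesgue_measure_itv /= lte_fin ab -EFinD.
  by rewrite mulr_gt0 ?fpos ?subr_gt0.
apply: le_Rintegral => //; first exact/integrable_cc/continuous_subspaceT/cst_continuous.
exact: integrable_cc.
Qed.

Lemma ge0_Fprim (R : realType) (f : R -> R) y : 0 <= y -> Fprim f y = 0.
Proof.
rewrite le_eqVlt => /predU1P[<-|y0]; rewrite /Fprim.
  by rewrite set_itv1 Rintegral_set1.
by rewrite set_itv_ge ?Rintegral_set0 // bnd_simp -ltNge.
Qed.

Lemma lt0_Fprim (R : realType) (f : R -> R) y : continuous f ->
  (forall s, 0 < f s) -> y < 0 -> 0 < Fprim f y.
Proof.
move=> cf fpos y0; apply: Rintegral_itv_gt0 => //.
exact: continuous_subspaceT.
Qed.

Section ConstantPhi.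
Variables (R : realType) (n : nat) (Om : set 'rV[R]_n) (f : R -> R).
Variables (u : 'rV[R]_n -> R) (Du : 'rV[R]_n -> 'rV[R]_n) (beta c : R).
Hypotheses (n_gt0 : (0 < n)%N) (oOm : open Om) (Om0 : Om !=set0).
Hypothesis cOm : compact (closure Om).
Hypotheses (fpos : forall s, 0 < f s) (cf : continuous f) (beta_gt0 : 0 < beta).
Hypotheses (du : forall x, Om x -> differentiable u x).
Hypothesis cu : {within closure Om, continuous u}.
Hypothesis DuE : forall x, Om x -> Du x = grad u x.
Hypothesis u_bd : forall x, closure Om x -> ~ Om x -> u x = 0.
Hypothesis Phi_c : forall x, closure Om x -> sqnorm (Du x) - beta * Fprim f (u x) = c.

Lemma Phi_const_ge0 : 0 <= c.
Proof.
have [b [Kb Nb]] := exists_boundary_point n_gt0 oOm Om0 cOm.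
by rewrite -(Phi_c Kb) u_bd // ge0_Fprim // mulr0 subr0 sqnorm_ge0.
Qed.

Lemma Phi_const_at_extremum x : Om x -> extremum_on Om u x ->
  c = - (beta * Fprim f (u x)).
Proof.
move=> Ox ext; rewrite -(Phi_c (subset_closure Ox)) DuE //.
by rewrite (grad_eq0_at_extremum oOm Ox du ext) sqnorm0 sub0r.
Qed.

Lemma solution_ge0 x : closure Om x -> 0 <= u x.
Proof.
have K0 : closure Om !=set0 by case: Om0 => z /subset_closure; exists z.
have [x0 /set_mem Kx0 x0min] := EVT_min_rV K0 cOm cu.
move=> Kx; apply: le_trans (x0min _ (mem_set Kx)); rewrite leNgt; apply/negP => ux0.
have Ox0 : Om x0 by apply/not_notP => Nx0; rewrite u_bd ?ltxx in ux0.
have ext : extremum_on Om u x0 by left => y /subset_closure /mem_set /x0min.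
have := Phi_const_ge0; rewrite (Phi_const_at_extremum Ox0 ext) oppr_ge0 leNgt.
by rewrite mulr_gt0 ?lt0_Fprim.
Qed.

Lemma solution_grad_eq0 x : Om x -> grad u x = 0.
Proof.
have [p Op ext] := interior_extremum Om0 cOm cu u_bd.
have c0 : c = 0.
  rewrite (Phi_const_at_extremum Op ext) ge0_Fprim ?mulr0 ?oppr0 //.
  exact/solution_ge0/subset_closure.
move=> Ox; have Kx := subset_closure Ox.
have := Phi_c Kx; rewrite c0 DuE // ge0_Fprim ?solution_ge0 // mulr0 subr0.
by move/eqP; rewrite sqnorm_eq0 => /eqP.
Qed.

End ConstantPhi.

Theorem lemma3p2 (R : realType) (n : nat) (Om : set 'rV[R]_n)
  (f g : R -> R) (u : 'rV[R]_n -> R) (Du : 'rV[R]_n -> 'rV[R]_n) (beta : R) :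
  (2 <= n)%N ->
  smooth_bounded_domain Om -> strictly_convex Om ->
  (forall s, 0 < f s) -> (forall s, 0 < g s) -> Ck1 2 f -> Ck1 2 g ->
  (forall s, 0 < s -> 0 < g s + 2 * s * derive1 g s) ->
  (* u is a classical solution: C^2 in Omega, continuous up to the boundary,
     with gradient extending continuously (as Du) to the closure *)
  C2_on Om u ->
  {within closure Om, continuous u} ->
  {within closure Om, continuous Du} ->
  (forall x, Om x -> Du x = grad u x) ->
  (forall x, Om x ->
     div (fun y => g (sqnorm (grad u y)) *: grad u y) x
     = f (u x) * (g (sqnorm (grad u x))
                  + 2 * sqnorm (grad u x) * derive1 g (sqnorm (grad u x)))) ->
  (forall x, closure Om x -> ~ Om x -> u x = 0) ->
  1 <= beta <= 2 ->
  ~ (exists c : R, forall x, closure Om x ->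
        sqnorm (Du x) - beta * Fprim f (u x) = c).
Proof.
move=> n2 [oOm _ Om0 [M OmM] _] _ fpos gpos [df _] _ _ [C1u _] cu _ DuE pde u_bd
  /andP[beta_ge1 _] [c Phi_c].
have n_gt0 : (0 < n)%N by apply: leq_trans n2.
have cf : continuous f by move=> x; apply/differentiable_continuous/derivable1_diffP.
have du x : Om x -> differentiable u x by move=> /C1u[].
have grad0 := solution_grad_eq0 n_gt0 oOm Om0 (bounded_closure_compact OmM) fpos cf
  (lt_le_trans ltr01 beta_ge1) du cu DuE u_bd Phi_c.
have [p Op] := Om0; have := pde _ Op.
rewrite grad0 // sqnorm0 mulr0 mul0r addr0 div_eq0_near.
  by move=> /esym/eqP; rewrite gt_eqF ?mulr_gt0.
by apply: filterS (oOm _ Op) => y Oy; rewrite grad0 // scaler0.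
Qed.
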